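(* Let $\{S;\tilde w_1,\dots,\tilde w_N;p_1,\dots,p_N\}$ be a DIFS. Let $I\subset\{1,\dots,N\}$ be the set of indices $i$ for which the minimal absorbing set $\mathcal M[\tilde w_i,S]$ exists, and suppose $I\neq\varnothing$. Let $\mathcal A_{\mathcal F}$ be the family of the recurrent communication classes of the associated Markov chain. Then: (a) $|\mathcal A_{\mathcal F}|\le\min_{i\in I}\mathcal M_\#[\tilde w_i,S]$, where $\mathcal M_\#[\tilde w_i,S]$ denotes the number of components of $\mathcal M[\tilde w_i,S]$; (b) if for some $i,j\in I$ one has $\mathcal M[\tilde w_i,S]\subset\mathcal B[\mathcal M_k[\tilde w_j,S]]$ for some component $\mathcal M_k[\tilde w_j,S]$ of $\mathcal M[\tilde w_j,S]$, then $|\mathcal A_{\mathcal F}|\le1$.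
   Context: $\mathcal D^n(\delta)=\{\delta m:m\in\mathbb Z^n\}$ for fixed $\delta>0$; $\mathbb N=\{1,2,\dots\}$. A DIFS $\{S;\tilde w_1,\dots,\tilde w_N;p_1,\dots,p_N\}$ consists of $S\subset\mathcal D^n(\delta)$, maps $\tilde w_i:S\to S$, and functions $p_i:S\to(0,1]$ with $\sum_ip_i(\tilde x)=1$ for every $\tilde x\in S$; its associated Markov chain on $S$ has transition probabilities $P(\tilde x,\tilde y)=\sum_ip_i(\tilde x)\mathbf 1_{\{\tilde y\}}(\tilde w_i(\tilde x))$. Accessibility: $P^k(\tilde x,\tilde y)>0$ for some $k\ge1$; a communication class is a maximal nonempty set of mutually accessible states; a state is recurrent if the chain started there returns to it in finitely many steps a.s.; a recurrent communication class is a communication class of recurrent states. Absorbing sets: for a map $\tilde w$ and nonempty $C$ with $\tilde w(C)\subset C$, a set $\Lambda\subset C$ is absorbing for $\tilde w$ in $C$ if for each $\tilde x\in C$ there is $N$ with $\tilde w^{\circ i}(\tilde x)\in\Lambda$ for all $i\ge N$. If the intersection of all absorbing sets for $\tilde w$ in $C$ is itself absorbing in $C$, it is the minimal absorbing set $\mathcal M[\tilde w,C]$ (and it is said to exist). Its components are the equivalence classes of the relation $\tilde x\sim\tilde y\iff\tilde w^{\circ j}(\tilde x)=\tilde w^{\circ l}(\tilde y)$ for some $j,l\in\mathbb N$; the basin of a component $\mathcal M_k$ is $\mathcal B[\mathcal M_k]=\{\tilde x\in C:\exists i\in\mathbb N,\ \tilde w^{\circ i}(\tilde x)\in\mathcal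 M_k\}$. *)

From HB Require Import structures.
From mathcomp Require Import all_boot all_order all_algebra.
From mathcomp Require Import all_classical all_reals all_analysis.
Set Implicit Arguments. Unset Strict Implicit. Unset Printing Implicit Defensive.
Import Order.TTheory GRing.Theory Num.Theory numFieldNormedType.Exports.
Local Open Scope classical_set_scope.
Local Open Scope ring_scope.

(* Points of R^n are row vectors 'rV[R]_n.  Indices {1,..,N} are 'I_N (0-based). *)

Section Defs.
Variables (R : realType) (n : nat).
Local Notation X := 'rV[R]_n.

Definition lattice (delta : R) : set X :=
  [set x | exists m : 'rV[int]_n, forall j, x ord0 j = delta * (m ord0 j)%:~R].

(* DIFS {S; w_1..w_N; p_1..p_N}: maps are total functions, only their
   behaviour on S matters. *)
Definition is_DIFS (delta : R) (N : nat) (S : set X)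
    (w : 'I_N -> X -> X) (p : 'I_N -> X -> R) : Prop :=
  [/\ 0 < delta, S `<=` lattice delta,
      (forall i x, S x -> S (w i x)),
      (forall i x, S x -> 0 < p i x <= 1) &
      (forall x, S x -> \sum_(i < N) p i x = 1)].

Definition trans N (w : 'I_N -> X -> X) (p : 'I_N -> X -> R) (x y : X) : R :=
  \sum_(i < N) p i x * (w i x == y)%:R.

(* k-step transition probabilities P^k(x,y); since P(x,.) is supported on
   {w_i x}, Chapman-Kolmogorov P^{k+1}(x,y) = sum_z P(x,z) P^k(z,y) reduces to
   the finite sum below. *)
Fixpoint transk N (w : 'I_N -> X -> X) (p : 'I_N -> X -> R) (k : nat) (x y : X) : R :=
  match k with
  | 0 => (x == y)%:R
  | k'.+1 => \sum_(i < N) p i x * transk w p k' (w i x) y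
  end.

Definition accessible N (w : 'I_N -> X -> X) (p : 'I_N -> X -> R) (x y : X) : Prop :=
  exists k, (0 < k)%N /\ 0 < transk w p k x y.

Definition mutually_accessible N (w : 'I_N -> X -> X) (p : 'I_N -> X -> R)
    (S C : set X) : Prop :=
  C `<=` S /\ (forall x y, C x -> C y -> accessible w p x y /\ accessible w p y x).

Definition comm_class N (w : 'I_N -> X -> X) (p : 'I_N -> X -> R) (S C : set X) : Prop :=
  [/\ C !=set0, mutually_accessible w p S C &
      forall D, C `<=` D -> mutually_accessible w p S D -> D = C].

Fixpoint first_passage N (w : 'I_N -> X -> X) (p : 'I_N -> X -> R) (k : nat) (x y : X) : R :=
  match k with
  | 0 => 0
  | 1 => trans w p x y
  | k'.+1 => \sum_(i < N) p i x * (w i x != y)%:R * first_passage w p k' (w i x) y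
  end.

Definition recurrent N (w : 'I_N -> X -> X) (p : 'I_N -> X -> R) (S : set X) (x : X) : Prop :=
  S x /\ (fun m : nat => \sum_(k < m) first_passage w p k.+1 x x) @ \oo --> (1 : R).

Definition recurrent_class N (w : 'I_N -> X -> X) (p : 'I_N -> X -> R) (S C : set X) : Prop :=
  comm_class w p S C /\ (forall x, C x -> recurrent w p S x).

Definition absorbing (f : X -> X) (C L : set X) : Prop :=
  L `<=` C /\ forall x, C x -> exists M : nat, forall i, (M <= i)%N -> L (iter i f x).

Definition min_abs_set (f : X -> X) (C : set X) : set X :=
  [set x | forall L, absorbing f C L -> L x].

Definition MAS_exists (f : X -> X) (C : set X) : Prop :=
  absorbing f C (min_abs_set f C).

Definition orbit_rel (f : X -> X) (x y : X) : Prop :=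
  exists j l : nat, [/\ (0 < j)%N, (0 < l)%N & iter j f x = iter l f y].

Definition component (f : X -> X) (C K : set X) : Prop :=
  exists x, min_abs_set f C x /\
    K = [set y | min_abs_set f C y /\ orbit_rel f x y].

Definition basin (f : X -> X) (C K : set X) : set X :=
  [set x | C x /\ exists i : nat, (0 < i)%N /\ K (iter i f x)].

End Defs.

From HB Require Import structures.
From mathcomp Require Import all_boot all_order all_algebra.
From mathcomp Require Import all_classical all_reals all_analysis.
Import Order.TTheory GRing.Theory Num.Theory numFieldNormedType.Exports.
Local Open Scope classical_set_scope.
Local Open Scope ring_scope.
Set Implicit Arguments. Unset Strict Implicit. Unset Printing Implicit Defensive.

(* A recurrent class C is closed under every map w_i: if w_i x could not lead
   back to x, the chain started at x would escape with probability at least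
   p_i(x) > 0.  Since M[w_i,S] is absorbing, the w_i-orbit of any point of C
   enters M[w_i,S], so C meets it; and two closed classes containing points
   with a common w_i-iterate share that iterate, hence coincide.  Mapping C to
   the component of a point of C ∩ M[w_i,S] is therefore injective, and under
   the basin hypothesis of (b) all w_i-orbits of points of M[w_i,S] meet, so
   there is at most one recurrent class. *)

Lemma iter_orbit_meet (T : Type) (f : T -> T) (x y z : T) (j l j' l' : nat) :
  iter j f x = iter l f y -> iter j' f x = iter l' f z ->
  exists a b, iter a f y = iter b f z.
Proof.
move=> exy exz; exists (j' + l)%N, (j + l')%N.
by rewrite !iterD -exy -exz -!iterD addnC.
Qed.

Section MarkovChain.
Variables (R : realType) (n N : nat) (S : set 'rV[R]_n).
Variables (w : 'I_N -> 'rV[R]_n -> 'rV[R]_n) (p : 'I_N -> 'rV[R]_n -> R).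
Hypothesis S_stable : forall i x, S x -> S (w i x).
Hypothesis p_range : forall i x, S x -> 0 < p i x <= 1.
Hypothesis p_sum1 : forall x, S x -> \sum_(i < N) p i x = 1.

Local Notation accessible := (accessible w p).

Lemma p_ge0 i x : S x -> 0 <= p i x.
Proof. by move=> /(p_range i)/andP[/ltW]. Qed.

Lemma transk_ge0 k x y : S x -> 0 <= transk w p k x y.
Proof.
elim: k x => [|k IH] x Sx /=; first exact: ler0n.
by apply: sumr_ge0 => i _; rewrite mulr_ge0 ?p_ge0 ?(IH _ (S_stable i Sx)).
Qed.

Lemma ler_transk_add a b x y z : S x -> S y ->
  transk w p a x y * transk w p b y z <= transk w p (a + b) x z.
Proof.
elim: a x => [|a IH] x Sx Sy /=.
  by case: eqP => [->|_]; rewrite ?mul1r // mul0r transk_ge0.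
rewrite mulr_suml; apply: ler_sum => i _.
by rewrite -mulrA ler_wpM2l ?p_ge0 ?(IH _ (S_stable i Sx)).
Qed.

Lemma accessible_trans x y z : S x -> S y ->
  accessible x y -> accessible y z -> accessible x z.
Proof.
move=> Sx Sy [a [a_gt0 Pa]] [b [b_gt0 Pb]]; exists (a + b)%N.
by rewrite addn_gt0 a_gt0 (lt_le_trans _ (ler_transk_add a b z Sx Sy)) ?mulr_gt0.
Qed.

Lemma accessible_step i x : S x -> accessible x (w i x).
Proof.
move=> Sx; exists 1%N; split => //=.
rewrite (bigD1 i) //= eqxx mulr1 ltr_pwDl //; first by case/andP: (p_range i Sx).
by apply: sumr_ge0 => j _; rewrite mulr_ge0 ?p_ge0 ?ler0n.
Qed.

Lemma first_passage1 x y : first_passage w p 1 x y = trans w p x y.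
Proof. by []. Qed.

Lemma first_passageS k x y : first_passage w p k.+2 x y =
  \sum_(i < N) p i x * (w i x != y)%:R * first_passage w p k.+1 (w i x) y.
Proof. by []. Qed.

Lemma first_passage_bounds k x y : S x ->
  0 <= first_passage w p k x y <= transk w p k x y.
Proof.
elim: k x => [|[|k] IH] x Sx; first by rewrite /= lexx ler0n.
  rewrite first_passage1 /= lexx andbT /trans.
  by apply: sumr_ge0 => i _; rewrite mulr_ge0 ?p_ge0 ?ler0n.
rewrite first_passageS [transk _ _ k.+2 _ _]/=.
apply/andP; split.
  apply: sumr_ge0 => i _; have /andP[fp_ge0 _] := IH _ (S_stable i Sx).
  by rewrite !mulr_ge0 ?p_ge0 ?ler0n.
apply: ler_sum => i _; rewrite -mulrA ler_wpM2l ?p_ge0 //.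
have /andP[fp_ge0 fp_le] := IH _ (S_stable i Sx).
by case: eqP => _; rewrite ?mul1r // mul0r (le_trans fp_ge0).
Qed.

Definition hit_prob (y : 'rV[R]_n) (m : nat) (z : 'rV[R]_n) : R :=
  \sum_(k < m) first_passage w p k.+1 z y.

Lemma hit_probS y m z : hit_prob y m.+1 z =
  \sum_(i < N) p i z * ((w i z == y)%:R + (w i z != y)%:R * hit_prob y m (w i z)).
Proof.
rewrite /hit_prob big_ord_recl.
under eq_bigr => k _ do rewrite lift0 first_passageS.
under eq_bigr do under eq_bigr do rewrite -mulrA.
rewrite first_passage1 /trans exchange_big -big_split /=; apply: eq_bigr => i _.
by rewrite mulrDr -!mulr_sumr.
Qed.

Lemma hit_step_le1 (b : bool) (h : R) : 0 <= h <= 1 -> 0 <= b%:R + (~~ b)%:R * h <= 1.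
Proof. by case: b; rewrite /= ?mul0r ?addr0 ?mul1r ?add0r ?ler01 ?lexx. Qed.

Lemma hit_prob_bounds y m z : S z -> 0 <= hit_prob y m z <= 1.
Proof.
elim: m z => [|m IH] z Sz; first by rewrite /hit_prob big_ord0 lexx ler01.
have step i := hit_step_le1 (w i z == y) (IH _ (S_stable i Sz)).
rewrite hit_probS; apply/andP; split.
  by apply: sumr_ge0 => i _; case/andP: (step i) => ? _; rewrite mulr_ge0 ?p_ge0.
rewrite -[leRHS](p_sum1 Sz); apply: ler_sum => i _.
by case/andP: (step i) => _ ?; rewrite ler_piMr ?p_ge0.
Qed.

Lemma hit_prob_eq0 y m z : S z -> ~ accessible z y -> hit_prob y m z = 0.
Proof.
move=> Sz zNy; rewrite /hit_prob big1 // => k _.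
have /andP[fp_ge0 fp_le] := first_passage_bounds k.+1 y Sz.
apply/eqP; rewrite eq_le fp_ge0 andbT (le_trans fp_le) // leNgt.
by apply/negP => Pk; apply: zNy; exists k.+1.
Qed.

Lemma hit_prob_le_escape i x m : S x -> ~ accessible (w i x) x ->
  hit_prob x m x <= 1 - p i x.
Proof.
move=> Sx esc; case: m => [|m].
  by rewrite /hit_prob big_ord0 subr_ge0; case/andP: (p_range i Sx).
have wix_neq : w i x != x.
  by apply/eqP => wix; apply: esc; rewrite {1}wix -{2}wix; apply: accessible_step.
have -> : 1 - p i x = \sum_(j < N | j != i) p j x.
  by rewrite -(p_sum1 Sx) (bigD1 i) //= addrAC subrr add0r.
rewrite hit_probS (bigD1 i) //= (negPf wix_neq) (hit_prob_eq0 _ (S_stable i Sx) esc).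
rewrite mulr0 addr0 mulr0 add0r.
apply: ler_sum => j _; rewrite ler_piMr ?p_ge0 //.
by case/andP: (hit_step_le1 (w j x == x) (hit_prob_bounds x m (S_stable j Sx))).
Qed.

Lemma recurrent_accessible_back i x : recurrent w p S x -> accessible (w i x) x.
Proof.
move=> [Sx return1]; apply: contrapT => esc.
have : 1 <= 1 - p i x.
  rewrite -{1}(cvg_lim _ return1) //; apply: limr_le; first exact: cvgP return1.
  exact: nearW (fun m => hit_prob_le_escape m Sx esc).
by rewrite lerBrDr gerDl leNgt; case/andP: (p_range i Sx) => ->.
Qed.

Lemma comm_class_absorb C x y : comm_class w p S C -> C x -> S y ->
  accessible x y -> accessible y x -> C y.
Proof.
move=> [_ [C_sub C_acc] C_max] Cx Sy xy yx.
suff <- : C `|` [set y] = C by right.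
apply: C_max; first exact: subsetUl.
have Sx := C_sub _ Cx.
have to_x a : (C `|` [set y]) a -> S a /\ accessible a x.
  by case=> [Ca|->]; [split; [exact: C_sub | case: (C_acc a x)] | ].
have of_x b : (C `|` [set y]) b -> accessible x b.
  by case=> [Cb|->]; [case: (C_acc x b) | ].
split; first by move=> a /to_x[].
move=> a b Da Db; have [Sa ax] := to_x _ Da; have [Sb bx] := to_x _ Db.
by split; [apply: accessible_trans Sa Sx ax _ | apply: accessible_trans Sb Sx bx _];
  apply: of_x.
Qed.

Lemma comm_class_eq C1 C2 z : comm_class w p S C1 -> comm_class w p S C2 ->
  C1 z -> C2 z -> C1 = C2.
Proof.
have incl D1 D2 : comm_class w p S D1 -> comm_class w p S D2 ->
    D1 z -> D2 z -> D2 `<=` D1.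
  move=> cD1 [_ [D2_sub D2_acc] _] D1z D2z y D2y.
  have [zy yz] := D2_acc z y D2z D2y.
  exact: comm_class_absorb cD1 D1z (D2_sub _ D2y) zy yz.
by move=> c1 c2 C1z C2z; apply/seteqP; split; apply: incl.
Qed.

Lemma recurrent_class_stable C i x : recurrent_class w p S C -> C x -> C (w i x).
Proof.
move=> [cC C_rec] Cx; have Sx : S x by case: cC => _ [C_sub _] _; exact: C_sub.
exact: comm_class_absorb cC Cx (S_stable i Sx) (accessible_step i Sx)
  (recurrent_accessible_back i (C_rec _ Cx)).
Qed.

Lemma recurrent_class_iter C i k x : recurrent_class w p S C -> C x -> C (iter k (w i) x).
Proof. by move=> rC Cx; elim: k => [|k IH] //=; apply: recurrent_class_stable. Qed.

Lemma recurrent_class_meets_min_abs_set C i : recurrent_class w p S C ->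
  MAS_exists (w i) S -> exists2 y, C y & min_abs_set (w i) S y.
Proof.
move=> rC [_ absorbs]; have [[[x Cx] [C_sub _] _] _] := rC.
have [M enters] := absorbs x (C_sub _ Cx).
by exists (iter M (w i) x); [apply: recurrent_class_iter | apply: enters].
Qed.

Lemma recurrent_class_eq_iter C1 C2 i x1 x2 a b :
  recurrent_class w p S C1 -> recurrent_class w p S C2 -> C1 x1 -> C2 x2 ->
  iter a (w i) x1 = iter b (w i) x2 -> C1 = C2.
Proof.
move=> rC1 rC2 C1x1 C2x2 meet.
apply: (comm_class_eq (z := iter a (w i) x1) rC1.1 rC2.1).
  exact: recurrent_class_iter rC1 C1x1.
by rewrite meet; apply: recurrent_class_iter rC2 C2x2.
Qed.

Lemma recurrent_class_to_component_inj i : MAS_exists (w i) S ->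
  exists f : {C : set 'rV[R]_n | recurrent_class w p S C} ->
             {K : set 'rV[R]_n | component (w i) S K}, injective f.
Proof.
move=> Mi; pose M := min_abs_set (w i) S.
have pick (C : {C | recurrent_class w p S C}) : {y | sval C y /\ M y}.
  by apply: cid; case: (recurrent_class_meets_min_abs_set (svalP C) Mi) => y; exists y.
pose K (y : 'rV[R]_n) := [set z | M z /\ orbit_rel (w i) y z].
have K_comp C : component (w i) S (K (sval (pick C))).
  by exists (sval (pick C)); split => //; case: (svalP (pick C)).
exists (fun C => exist _ _ (K_comp C)) => -[C1 rC1] [C2 rC2] /(congr1 sval) /= eK.
move: eK; case: (pick _) => y1 /= [C1y1 My1]; case: (pick _) => y2 /= [C2y2 My2] eK.
have [_ [a [b [_ _ meet]]]] : K y2 y1 by rewrite -eK; split => //; exists 1%N, 1%N.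
have eC := recurrent_class_eq_iter rC2 rC1 C2y2 C1y1 meet; subst C2.
by congr exist; apply: Prop_irrelevance.
Qed.

Lemma recurrent_class_unique_of_basin i j C1 C2 :
  MAS_exists (w i) S ->
  (exists K, component (w j) S K /\ min_abs_set (w i) S `<=` basin (w j) S K) ->
  recurrent_class w p S C1 -> recurrent_class w p S C2 -> C1 = C2.
Proof.
move=> Mi [_ [[x0 [_ ->]] M_basin]] rC1 rC2.
have [y1 C1y1 /M_basin [_ [a1 [_ [_ [j1 [l1 [_ _ e1]]]]]]]] :=
  recurrent_class_meets_min_abs_set rC1 Mi.
have [y2 C2y2 /M_basin [_ [a2 [_ [_ [j2 [l2 [_ _ e2]]]]]]]] :=
  recurrent_class_meets_min_abs_set rC2 Mi.
have [a [b meet]] := iter_orbit_meet e1 e2.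
rewrite -!iterD in meet.
exact: recurrent_class_eq_iter rC1 rC2 C1y1 C2y2 meet.
Qed.

End MarkovChain.

Theorem theorem12 (R : realType) (n : nat) (delta : R) (N : nat)
    (S : set 'rV[R]_n) (w : 'I_N -> 'rV[R]_n -> 'rV[R]_n)
    (p : 'I_N -> 'rV[R]_n -> R) :
  is_DIFS delta S w p ->
  (exists i : 'I_N, MAS_exists (w i) S) ->
  (forall i : 'I_N, MAS_exists (w i) S ->
     exists f : {C : set 'rV[R]_n | recurrent_class w p S C} ->
                {K : set 'rV[R]_n | component (w i) S K},
       injective f) /\
  (forall i j : 'I_N, MAS_exists (w i) S -> MAS_exists (w j) S ->
     (exists K, component (w j) S K /\
        min_abs_set (w i) S `<=` basin (w j) S K) ->
     forall C1 C2, recurrent_class w p S C1 -> recurrent_class w p S C2 -> C1 = C2).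
Proof.
move=> [_ _ S_stable p_range p_sum1] _; split.
  exact: recurrent_class_to_component_inj S_stable p_range p_sum1.
move=> i j Mi _ M_basin C1 C2.
exact: (recurrent_class_unique_of_basin S_stable p_range p_sum1 Mi M_basin).
Qed.
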